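(* Let $q$ be a prime power, let $m,k$ be integers with $0<k<m$ and $l=\gcd(k,m)$. Let $c\in\mathbb{F}_{q^l}^*$ and $g(x)\in\mathbb{F}_{q^m}[x]$. Then $g(x^{q^k}+x+\delta)+cx$ is a permutation polynomial of $\mathbb{F}_{q^m}$ for every $\delta\in\mathbb{F}_{q^m}$ if and only if $h(x)=g(x)^{q^k}+g(x)+cx$ is a permutation polynomial of $\mathbb{F}_{q^m}$.
   Context: A polynomial $f\in\mathbb{F}_Q[x]$ is a permutation polynomial of $\mathbb{F}_Q$ if the map $c\mapsto f(c)$ is a bijection of $\mathbb{F}_Q$. $\mathbb{F}_{q^l}$ is viewed as a subfield of $\mathbb{F}_{q^m}$ (since $l\mid m$). *)

From HB Require Import structures.
From mathcomp Require Import all_boot all_order all_algebra all_field.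
Set Implicit Arguments. Unset Strict Implicit. Unset Printing Implicit Defensive.
Import GRing.Theory.
Local Open Scope ring_scope.

Definition perm_poly (F : finFieldType) (f : {poly F}) : Prop :=
  bijective (fun x : F => f.[x]).

Definition prime_power (q : nat) : Prop :=
  exists p r : nat, [/\ prime p, (0 < r)%N & q = (p ^ r)%N].

From HB Require Import structures.
From mathcomp Require Import all_boot all_order all_algebra all_field.
From mathcomp Require Import ring.
Set Implicit Arguments. Unset Strict Implicit. Unset Printing Implicit Defensive.
Import GRing.Theory.
Local Open Scope ring_scope.

(* Write Q = q^k and psi(x) = x^Q + x.  Since Q is a power of the
   characteristic, psi is additive, and psi(c x) = c psi(x) because c^Q = c
   (c lies in F_{q^l} and l divides k).  Put
     f_d(x) = g(psi(x) + d) + c x      and      h(y) = g(y)^Q + g(y) + c y;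
   f_d and h are the polynomial functions of the theorem.  Everything rests
   on the identity  psi(f_d(x)) = h(psi(x) + d) - c d.
   - If h is injective, then f_d(x) = f_d(y) forces psi x = psi y, hence
     g(psi x + d) = g(psi y + d) and finally c x = c y.
   - If every f_d is bijective, then for fixed u the map s |-> h(s+u) - c u
     sends the image S of psi onto itself (it is psi o f_u o psi^{-1}), so it
     is injective on the finite set S.  Moreover h(w) - c w = psi(f_w(0)) lies
     in S for all w, so h(u) = h(v) gives c(v - u) in S, hence v - u in S,
     and injectivity on S yields v = u. *)

Lemma onto_finset_inj (T : finType) (S : {set T}) (lam : T -> T) :
  S \subset lam @: S -> {in S &, injective lam}.
Proof.
move=> sub; apply/imset_injP.
by rewrite eqn_leq leq_imset_card subset_leq_card.
Qed.

Lemma fixed_expn (R : pzSemiRingType) (x : R) (n j : nat) :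
  x ^+ n = x -> x ^+ (n ^ j) = x.
Proof.
move=> xn; elim: j => [|j IH]; first by rewrite expr1.
by rewrite expnSr exprM IH xn.
Qed.

Section AdditivePsi.

Variables (F : fieldType) (Q : nat).
Hypothesis hQ : [pchar F].-nat Q.

Definition psi (x : F) : F := x ^+ Q + x.

Lemma psiD (x y : F) : psi (x + y) = psi x + psi y.
Proof. by rewrite /psi exprDn_pchar // addrACA. Qed.

Lemma psi0 : psi 0 = 0.
Proof. by apply: (@addrI _ (psi 0)); rewrite -psiD !addr0. Qed.

Lemma psiN (x : F) : psi (- x) = - psi x.
Proof. by apply: (@addrI _ (psi x)); rewrite -psiD !subrr psi0. Qed.

Lemma psiZ (a x : F) : a ^+ Q = a -> psi (a * x) = a * psi x.
Proof. by move=> aQ; rewrite /psi exprMn aQ mulrDr. Qed.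

End AdditivePsi.

Section PermutationCriterion.

Variables (F : finFieldType) (Q : nat) (c : F) (g : {poly F}).
Hypotheses (hQ : [pchar F].-nat Q) (hc0 : c != 0) (cQ : c ^+ Q = c).

Local Notation psi := (psi Q).

Definition fshift (d x : F) : F := g.[psi x + d] + c * x.

Definition hmap (y : F) : F := g.[y] ^+ Q + g.[y] + c * y.

Lemma psi_fshift (d x : F) : psi (fshift d x) = hmap (psi x + d) - c * d.
Proof. by rewrite /fshift psiD // psiZ // /hmap /psi; ring. Qed.

Lemma hmap_sub_image (w : F) : hmap w - c * w = psi (fshift w 0).
Proof. by rewrite psi_fshift psi0 // add0r. Qed.

Lemma fshift_inj (d : F) : injective hmap -> injective (fshift d).
Proof.
move=> hinj x y fxy.
have : psi (fshift d x) = psi (fshift d y) by rewrite fxy.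
rewrite !psi_fshift => /addIr /hinj /addIr psixy.
by move: fxy; rewrite /fshift psixy => /addrI /(mulfI hc0).
Qed.

Lemma hmap_inj : (forall d, bijective (fshift d)) -> injective hmap.
Proof.
move=> fbij u v huv.
pose S := [set psi x | x : F].
have psiS x : psi x \in S by apply: imset_f.
(* v - u lies in S, because c (v - u) does. *)
have [t vE] : exists t, v = u + psi t.
  have cvu : c * (v - u) = psi (fshift u 0 - fshift v 0).
    by rewrite psiD // psiN // -!hmap_sub_image huv; ring.
  exists (c^-1 * (fshift u 0 - fshift v 0)).
  rewrite psiZ; last by rewrite exprVn cQ.
  by rewrite -cvu mulKf // addrC subrK.
(* s |-> h(s + u) - c u maps S onto S, hence is injective on S. *)
pose lam s := hmap (s + u) - c * u.
have lam_onto : S \subset lam @: S.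
  apply/subsetP => _ /imsetP [y _ ->].
  have [finv _ finvK] := fbij u.
  by apply/imsetP; exists (psi (finv y)); rewrite ?psiS // /lam -psi_fshift finvK.
have : lam (psi t) = lam 0 by rewrite /lam add0r (addrC (psi t)) -vE huv.
rewrite -(psi0 hQ) => /(onto_finset_inj lam_onto (psiS t) (psiS 0)) t0.
by rewrite vE t0 psi0 // addr0.
Qed.

End PermutationCriterion.

Lemma pchar_nat_card_pow (F : finFieldType) (q m k : nat) :
  prime_power q -> #|F| = (q ^ m)%N -> (0 < m)%N -> [pchar F].-nat (q ^ k)%N.
Proof.
case=> p [r [pp r0 ->]] hF m0.
have chp : p \in [pchar F].
  by apply: (@card_finPcharP F p (r * m)) => //; rewrite hF expnM.
by rewrite -expnM pnatX (pnatE _ pp) chp.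
Qed.

Theorem lemma2 (F : finFieldType) (q m k : nat)
  (hq : prime_power q) (hF : #|F| = (q ^ m)%N)
  (hk0 : (0 < k)%N) (hkm : (k < m)%N)
  (c : F) (hc0 : c != 0) (hc : c ^+ (q ^ gcdn k m) = c)
  (g : {poly F}) :
  (forall delta : F,
     perm_poly ((g \Po ('X ^+ (q ^ k) + 'X + delta%:P)) + c *: 'X))
  <-> perm_poly (g ^+ (q ^ k) + g + c *: 'X).
Proof.
have hQ := pchar_nat_card_pow k hq hF (ltn_trans hk0 hkm).
have cQ : c ^+ (q ^ k) = c.
  by rewrite -(divnK (dvdn_gcdl k m)) mulnC expnM fixed_expn.
have evalf d x : ((g \Po ('X ^+ (q ^ k) + 'X + d%:P)) + c *: 'X).[x]
                 = fshift (q ^ k) c g d x.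
  by rewrite hornerD horner_comp hornerZ !hornerD hornerXn hornerX hornerC.
have evalh y : (g ^+ (q ^ k) + g + c *: 'X).[y] = hmap (q ^ k) c g y.
  by rewrite !hornerD horner_exp hornerZ hornerX.
rewrite /perm_poly; split=> [fbij | hbij d].
- apply: (@eq_bij F F _ (injF_bij (hmap_inj (g := g) hQ hc0 cQ _))) => [d | y].
    by apply: (@eq_bij F F _ (fbij d)) => x; rewrite evalf.
  by rewrite evalh.
- apply: (@eq_bij F F _ (injF_bij (fshift_inj (g := g) (d := d) hQ hc0 cQ _))) => [| x].
    by apply/bij_inj/(@eq_bij F F _ hbij) => y; rewrite evalh.
  by rewrite evalf.
Qed.
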